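(* Let $I \subseteq K[\mathbf{X}]=K[X_1,\dots,X_n]$ be an ideal and let $<_1$ and $<_2$ be two term orders (each of the form $<_{\mathbf{r},m}$ described in the context). Let $G\subseteq I$ be a set which is a Gröbner basis of $I$ both with respect to $<_1$ and with respect to $<_2$. If $<_1$ and $<_2$ are equivalent with respect to $G$, then they are equivalent with respect to $I$.
   Context: $K$ is a field complete for a discrete valuation $\mathrm{val}$ (e.g. $\mathbb{Q}_p$ or $\mathbb{Q}((T))$). A term is $c\mathbf{X}^{\alpha}$ with $c\in K^\times$, $\alpha\in\mathbb{N}^n$. For $\mathbf{r}\in\mathbb{Q}^n$, the Tate algebra $K\{\mathbf{X};\mathbf{r}\}$ is the set of series $\sum_{\alpha} a_\alpha \mathbf{X}^\alpha$ with $\mathrm{val}(a_\alpha)-\mathbf{r}\cdot\alpha\to+\infty$ as $|\alpha|\to\infty$; the Gauss valuation of a term is $\mathrm{val}_{\mathbf{r}}(a\mathbf{X}^\alpha)=\mathrm{val}(a)-\mathbf{r}\cdot\alpha$ and of a series is the minimum over its terms. Given a monomial order $\le_m$, the term order $<_{\mathbf{r},m}$ is: $a\mathbf{X}^\alpha<_{\mathbf{r},m} b\mathbf{X}^\beta$ iff $\mathrm{val}_{\mathbf{r}}(a\mathbf{X}^\alpha)>\mathrm{val}_{\mathbf{r}}(b\mathbf{X}^\beta)$, or these are equal and $\mathbf{X}^\alpha<_m\mathbf{X}^\beta$. The leading term $\mathrm{LT}_<(f)$ of a nonzero series is its maximal term. For an ideal $I\subseteq K[\mathbf{X}]$, $I_{\mathbf{r}}$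 is the ideal of $K\{\mathbf{X};\mathbf{r}\}$ generated by $I$; a set $G\subseteq I$ is a Gröbner basis of $I$ with respect to $<_{\mathbf{r},m}$ if for every nonzero $f\in I_{\mathbf{r}}$ there is $g\in G$ with $\mathrm{LT}_{\mathbf{r},m}(g)$ dividing $\mathrm{LT}_{\mathbf{r},m}(f)$ (divisibility of terms = divisibility of their monomials). For a term order $<$, $\mathrm{LT}_<(I)$ denotes the ideal of $K[\mathbf{X}]$ generated by $\{\mathrm{LT}_<(f): f\in I\setminus\{0\}\}$, and for a finite set $F$ of polynomials $\mathrm{LT}_<(F)=\{\mathrm{LT}_<(f): f\in F\}$. Two term orders are equivalent with respect to a set $F$ of polynomials if $\mathrm{LT}_{<_1}(F)=\mathrm{LT}_{<_2}(F)$, and equivalent with respect to an ideal $I$ if $\mathrm{LT}_{<_1}(I)=\mathrm{LT}_{<_2}(I)$. *)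

From HB Require Import structures.
From mathcomp Require Import all_boot all_order all_algebra.
From mathcomp Require Import mpoly.

Set Implicit Arguments.
Unset Strict Implicit.
Unset Printing Implicit Defensive.

Import Order.TTheory GRing.Theory Num.Theory.
Local Open Scope ring_scope.

(* A complete discretely valued field.  val : K -> int is the (normalized)
   discrete valuation on K^x; its value at 0 (= +oo) is never used, all
   axioms are guarded by nonzeroness.                                   *)
Definition complete_discrete_valuation (K : fieldType) (val : K -> int) : Prop :=
  [/\ (forall x y : K, x != 0 -> y != 0 -> val (x * y) = val x + val y),
      (forall x y : K, x != 0 -> y != 0 -> x + y != 0 ->
                       Num.min (val x) (val y) <= val (x + y)),
      (exists pi : K, pi != 0 /\ val pi = 1) &
      (forall a : nat -> K,
         (forall M : int, exists N : nat, forall p q : nat,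
              (N <= p)%N -> (N <= q)%N -> a p != a q -> M <= val (a p - a q)) ->
         exists l : K, forall M : int, exists N : nat, forall p : nat,
              (N <= p)%N -> a p != l -> M <= val (a p - l))].

Definition monomial_order (n : nat) (ltm : rel 'X_{1..n}) : Prop :=
  [/\ (forall a, ~~ ltm a a),
      (forall a b c, ltm a b -> ltm b c -> ltm a c),
      (forall a b, a != b -> ltm a b \/ ltm b a),
      (forall a b c, ltm a b -> ltm (mnm_add a c) (mnm_add b c)) &
      (forall a, a != mnm0 -> ltm mnm0 a)].

Section TermOrders.
Variables (K : fieldType) (val : K -> int) (n : nat).

Definition rdot (r : 'I_n -> rat) (a : 'X_{1..n}) : rat :=
  \sum_(i < n) r i * ((a i)%:R : rat).

Definition gval (r : 'I_n -> rat) (c : K) (a : 'X_{1..n}) : rat :=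
  ((val c)%:~R : rat) - rdot r a.

(* the term order <_{r,m} on terms c X^alpha (c <> 0):
   term_lt r ltm (c,a) (d,b)  means  c X^a <_{r,m} d X^b *)
Definition term_lt (r : 'I_n -> rat) (ltm : rel 'X_{1..n})
    (c : K) (a : 'X_{1..n}) (d : K) (b : 'X_{1..n}) : Prop :=
  gval r c a > gval r d b \/ (gval r c a = gval r d b /\ ltm a b).

(* formal series sum_alpha s(alpha) X^alpha *)
Definition series := 'X_{1..n} -> K.

Definition poly_series (p : {mpoly K[n]}) : series := fun a => p@_a.

Definition in_tate (r : 'I_n -> rat) (s : series) : Prop :=
  forall M : rat, exists d : nat, forall a : 'X_{1..n},
    (d < mdeg a)%N -> s a != 0 -> M < gval r (s a) a.

Definition mul_series_poly (s : series) (p : {mpoly K[n]}) : series :=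
  fun g => \big[+%R/0]_(b <- msupp p)
             (if lem b g then s (mnm_sub g b) * p@_b else 0).

Definition is_ideal (I : {mpoly K[n]} -> Prop) : Prop :=
  [/\ I 0, (forall f g, I f -> I g -> I (f + g)) &
      (forall h f, I f -> I (h * f))].

Definition gen_ideal (S : {mpoly K[n]} -> Prop) (p : {mpoly K[n]}) : Prop :=
  exists (k : nat) (h f : 'I_k -> {mpoly K[n]}),
    (forall i, S (f i)) /\ p = \big[+%R/0]_(i < k) (h i * f i).

Definition tate_ideal (r : 'I_n -> rat) (I : {mpoly K[n]} -> Prop)
    (s : series) : Prop :=
  exists (k : nat) (h : 'I_k -> series) (f : 'I_k -> {mpoly K[n]}),
    [/\ (forall i, in_tate r (h i)), (forall i, I (f i)) &
        (forall g, s g = \big[+%R/0]_(i < k) mul_series_poly (h i) (f i) g)].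

Definition is_LT (r : 'I_n -> rat) (ltm : rel 'X_{1..n}) (s : series)
    (c : K) (a : 'X_{1..n}) : Prop :=
  [/\ c != 0, s a = c &
      forall b, b != a -> s b != 0 -> term_lt r ltm (s b) b c a].

Definition groebner_basis (r : 'I_n -> rat) (ltm : rel 'X_{1..n})
    (I G : {mpoly K[n]} -> Prop) : Prop :=
  (forall g, G g -> I g) /\
  forall s : series, tate_ideal r I s -> (exists a, s a != 0) ->
    forall (c : K) (a : 'X_{1..n}), is_LT r ltm s c a ->
      exists g, G g /\ exists (d : K) (b : 'X_{1..n}),
        is_LT r ltm (poly_series g) d b /\ lem b a.

Definition LT_set (r : 'I_n -> rat) (ltm : rel 'X_{1..n})
    (F : {mpoly K[n]} -> Prop) (t : {mpoly K[n]}) : Prop :=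
  exists f (c : K) (a : 'X_{1..n}),
    [/\ F f, f != 0, is_LT r ltm (poly_series f) c a & t = c *: 'X_[a]].

Definition equiv_wrt_set r1 ltm1 r2 ltm2 (F : {mpoly K[n]} -> Prop) : Prop :=
  forall t, LT_set r1 ltm1 F t <-> LT_set r2 ltm2 F t.

Definition equiv_wrt_ideal r1 ltm1 r2 ltm2 (I : {mpoly K[n]} -> Prop) : Prop :=
  forall p, gen_ideal (LT_set r1 ltm1 I) p <-> gen_ideal (LT_set r2 ltm2 I) p.

End TermOrders.

From mathcomp Require Import all_boot all_order all_algebra.
From mathcomp Require Import mpoly.

Set Implicit Arguments.
Unset Strict Implicit.
Unset Printing Implicit Defensive.
Import Order.TTheory GRing.Theory Num.Theory.
Local Open Scope ring_scope.

(* Every f in I lies in the Tate ideal I_r, so when G is a Groebner basis for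
   <_1 the leading term LT_1(f) is a monomial multiple of some LT_1(g), g in G.
   Hence LT_1(I) is generated by LT_1(G) = LT_2(G), which lies in LT_2(I);
   exchanging the roles of the two orders gives the reverse inclusion. *)

Section GroebnerLeadingTerms.
Variables (K : fieldType) (val : K -> int) (n : nat).
Implicit Types (r : 'I_n -> rat) (ltm : rel 'X_{1..n}).
Implicit Types (I G S T : {mpoly K[n]} -> Prop) (f p : {mpoly K[n]}).

Definition series1 : series K n := fun a => (a == 0%MM)%:R.

Lemma in_tate_series1 r : in_tate val r series1.
Proof.
move=> M; exists 0%N => a; rewrite /series1.
by case: (eqVneq a 0%MM) => [-> | _]; rewrite ?mdeg0 //= eqxx.
Qed.

Lemma mul_series1_poly f : mul_series_poly series1 f =1 poly_series f.
Proof.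
move=> a; rewrite /mul_series_poly /poly_series.
have term b : (if lem b a then series1 (mnm_sub a b) * f@_b else 0)
              = (if b == a then f@_b else 0).
  rewrite /series1; case: (eqVneq b a) => [-> | neq_ba].
    by rewrite lepm_refl -[X in (X - a)%MM]add0m addmK eqxx mul1r.
  case: ifP => // le_ba; case: (eqVneq (mnm_sub a b) 0%MM) => [sub0 | _].
    by case/eqP: neq_ba; rewrite -(submK le_ba) sub0 add0m.
  by rewrite mul0r.
rewrite (eq_bigr _ (fun b _ => term b)) -big_mkcond.
case: (boolP (a \in msupp f)) => [a_in | a_notin].
  by rewrite -big_filter filter_pred1_uniq ?msupp_uniq // big_seq1.
rewrite (memN_msupp_eq0 a_notin) big1_seq // => b /andP[/eqP -> a_in].
by case/negP: a_notin.
Qed.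

Lemma tate_ideal_poly r I f : I f -> tate_ideal val r I (poly_series f).
Proof.
move=> If; exists 1%N, (fun _ => series1), (fun _ => f); split=> // [_|a].
  exact: in_tate_series1.
by rewrite big_ord1 mul_series1_poly.
Qed.

Lemma LT_set_sub r ltm S T :
  (forall f, S f -> T f) -> forall p, LT_set val r ltm S p -> LT_set val r ltm T p.
Proof. by move=> sST p [f [c [a [/sST Tf nz_f LTf ->]]]]; exists f, c, a. Qed.

Lemma groebner_LT_dvd r ltm I G : groebner_basis val r ltm I G ->
  forall t, LT_set val r ltm I t ->
  exists u t', LT_set val r ltm G t' /\ t = u * t'.
Proof.
move=> [_ hG] t [f [c [a [If _ LTf ->]]]].
have [nz_c fa _] := LTf.
have nz_fs : exists a', poly_series f a' != 0 by exists a; rewrite fa.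
have [g [Gg [d [b [LTg le_ba]]]]] := hG _ (tate_ideal_poly r If) nz_fs c a LTf.
have [nz_d gb _] := LTg.
have nz_g : g != 0 by apply: contraNneq nz_d => g0; rewrite -gb /poly_series g0 mcoeff0.
exists ((c / d) *: 'X_[mnm_sub a b]), (d *: 'X_[b]); split; first by exists g, d, b.
by rewrite -scalerAr -scalerAl -mpolyXD submK // scalerA mulrC divfK.
Qed.

Lemma gen_ideal_sub_multiples S T :
  (forall s, S s -> exists u t, T t /\ s = u * t) ->
  forall p, gen_ideal S p -> gen_ideal T p.
Proof.
move=> mulST p [k [h [f [Sf ->]]]].
have [ut ut_spec] := fin_all_exists (fun i => mulST _ (Sf i)).
have [vt vt_spec] := fin_all_exists (fun i => ut_spec i).
exists k, (fun i => h i * ut i), vt; split=> [i | ]; first by case: (vt_spec i).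
by apply: eq_bigr => i _; case: (vt_spec i) => _ ->; rewrite mulrA.
Qed.

Lemma gen_LT_ideal_sub r1 ltm1 r2 ltm2 I G :
  groebner_basis val r1 ltm1 I G ->
  (forall t, LT_set val r1 ltm1 G t -> LT_set val r2 ltm2 G t) ->
  forall p, gen_ideal (LT_set val r1 ltm1 I) p -> gen_ideal (LT_set val r2 ltm2 I) p.
Proof.
move=> hG sLT; apply: gen_ideal_sub_multiples => t /(groebner_LT_dvd hG).
move=> [u [t' [LTt' ->]]]; exists u, t'; split=> //.
exact: LT_set_sub hG.1 _ (sLT _ LTt').
Qed.

End GroebnerLeadingTerms.

Theorem mainTheorem1 (K : fieldType) (val : K -> int) (n : nat)
    (hval : complete_discrete_valuation val)
    (r1 r2 : 'I_n -> rat) (ltm1 ltm2 : rel 'X_{1..n})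
    (hm1 : monomial_order ltm1) (hm2 : monomial_order ltm2)
    (I G : {mpoly K[n]} -> Prop) (hI : is_ideal I)
    (hG1 : groebner_basis val r1 ltm1 I G)
    (hG2 : groebner_basis val r2 ltm2 I G)
    (heq : equiv_wrt_set val r1 ltm1 r2 ltm2 G) :
  equiv_wrt_ideal val r1 ltm1 r2 ltm2 I.
Proof.
move=> p; split.
  exact: gen_LT_ideal_sub hG1 (fun t => proj1 (heq t)) p.
exact: gen_LT_ideal_sub hG2 (fun t => proj2 (heq t)) p.
Qed.
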